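(* Let $R>0$ and let $E\subset\mathbb{R}^d$ be an $R$-supported body. Then $$co_R(E)=E_R\cap\Big(\bigcap_{a\in\partial E}C^a_{\mathcal{N}_R(E,a)}\Big).$$
   Context: A body is a nonempty closed subset of $\mathbb{R}^d$; $S^{d-1}$ is the unit sphere; $B(x)=\{y:|y-x|<R\}$. $E_R=\{x:\operatorname{dist}(x,E)<R\}$. The $R$-hulloid is $co_R(E)=\bigcap\{\mathbb{R}^d\setminus B : B \text{ an open ball of radius } R,\ B\cap E=\emptyset\}$ (equal to $\mathbb{R}^d$ if no such ball exists). For a body $A$ and $a\in\partial A$, $\mathcal{N}_R(A,a)=\{v\in S^{d-1}: A\cap B(a+Rv)=\emptyset\}$; $A$ is $R$-supported if $\mathcal{N}_R(A,a)\ne\emptyset$ for all $a\in\partial A$. For nonempty closed $\mathcal K\subset S^{d-1}$ and $x\in\mathbb{R}^d$, $C^x_{\mathcal K}=\bigcap_{v\in\mathcal K}(\mathbb{R}^d\setminus B(x+Rv))$. An intersection over an empty index set is $\mathbb{R}^d$. *)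

(* R^d is modelled as row vectors 'rV[R]_d over R : realType,
   with the (product = Euclidean) topology of the library, and the Euclidean norm below. *)
From mathcomp Require Import all_boot all_order all_algebra.
From mathcomp Require Import all_classical all_reals all_analysis.
Set Implicit Arguments. Unset Strict Implicit. Unset Printing Implicit Defensive.
Import Order.TTheory GRing.Theory Num.Theory.
Import numFieldNormedType.Exports.
Local Open Scope classical_set_scope.
Local Open Scope ring_scope.

Section Defs.
Variables (R : realType) (d : nat).
Notation V := 'rV[R]_d.

Definition enorm (x : V) : R := Num.sqrt (\sum_(i < d) (x ord0 i) ^+ 2).

Definition oball (r : R) (x : V) : set V := [set y | enorm (y - x) < r].

Definition sphere : set V := [set v | enorm v = 1].

Definition body (E : set V) : Prop := closed E /\ E !=set0.

Definition bdry (E : set V) : set V := closure E `\` interior E.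

Definition dist (x : V) (E : set V) : R := inf [set enorm (x - y) | y in E].

Definition Rnbhd (r : R) (E : set V) : set V := [set x | dist x E < r].

Definition hulloid (r : R) (E : set V) : set V :=
  \bigcap_(c in [set c | oball r c `&` E = set0]) ~` oball r c.

Definition NR (r : R) (A : set V) (a : V) : set V :=
  [set v | sphere v /\ A `&` oball r (a + r *: v) = set0].

Definition R_supported (r : R) (A : set V) : Prop :=
  forall a, bdry A a -> NR r A a !=set0.

Definition Ccone (r : R) (K : set V) (x : V) : set V :=
  \bigcap_(v in K) ~` oball r (x + r *: v).

End Defs.

(* The inclusion of the hulloid in the right-hand side is immediate: the ball
   of radius R around a point at distance at least R from E misses E, and the
   balls defining the cones C^a_{N_R(E,a)} miss E by definition.  Conversely,
   let x be in the right-hand side and let B(c) be a ball missing E.  Sliding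
   the centre from c towards x, the distance of the centre to E is continuous,
   at least R at c and less than R at x, so it equals R at some centre p with
   x still in B(p).  A nearest point a of E to p is then a boundary point of E,
   and (p - a)/R lies in N_R(E,a), so x is excluded from B(p) by the cone at a. *)

From mathcomp Require Import all_boot all_order all_algebra.
From mathcomp Require Import all_classical all_reals all_analysis.
From mathcomp Require Import ring lra.
Import Order.TTheory GRing.Theory Num.Theory.
Import numFieldNormedType.Exports.
Set Implicit Arguments.
Unset Strict Implicit.
Unset Printing Implicit Defensive.
Local Open Scope classical_set_scope.
Local Open Scope ring_scope.

Lemma sum_mul_sqr_le (R : realFieldType) (I : finType) (a b : I -> R) :
  (\sum_i a i * b i) ^+ 2 <= (\sum_i a i ^+ 2) * (\sum_i b i ^+ 2).
Proof.
set A := \sum_i a i ^+ 2; set B := \sum_i b i ^+ 2; set C := \sum_i a i * b i.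
have A_ge0 : 0 <= A by apply: sumr_ge0 => i _; exact: sqr_ge0.
have lagrange : \sum_i (A * b i - C * a i) ^+ 2 = A * (A * B - C ^+ 2).
  rewrite (eq_bigr (fun i => A ^+ 2 * b i ^+ 2 - (2 * A * C) * (a i * b i)
              + C ^+ 2 * a i ^+ 2)); last by move=> i _; ring.
  by rewrite !big_split /= sumrN -!mulr_sumr -/A -/B -/C; ring.
have : 0 <= A * (A * B - C ^+ 2).
  by rewrite -lagrange; apply: sumr_ge0 => i _; exact: sqr_ge0.
have [A0|A_neq0] := eqVneq A 0; last first.
  by rewrite pmulr_rge0 ?subr_ge0 // lt_neqAle eq_sym A_neq0.
have a0 i : a i = 0.
  apply/eqP; rewrite -sqrf_eq0; apply/eqP.
  move: A0 => /eqP; rewrite psumr_eq0 => [/allP /(_ i)|j _]; last exact: sqr_ge0.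
  by rewrite mem_index_enum => /(_ isT) /eqP.
rewrite /C big1; last by move=> i _; rewrite a0 mul0r.
by move=> _; rewrite expr0n /= A0 mul0r.
Qed.

Lemma lipschitz_continuous (R : realFieldType) (U : normedModType R)
    (f : U -> R) (k : R) :
  (forall x y, `|f x - f y| <= k * `|x - y|) -> continuous f.
Proof.
move=> f_lip x; apply/cvgrPdist_lt => e e0.
have k1_gt0 : 0 < `|k| + 1 by rewrite ltr_wpDl.
near=> y.
have xy_small : `|x - y| < e / (`|k| + 1).
  by near: y; apply: cvgr_dist_lt; [exact: cvg_id | rewrite divr_gt0].
apply: (le_lt_trans (f_lip x y)); apply: (@le_lt_trans _ _ ((`|k| + 1) * `|x - y|)).
  by rewrite ler_wpM2r // (le_trans (ler_norm k)) // lerDl.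
by rewrite mulrC -ltr_pdivlMr.
Unshelve. all: by end_near.
Qed.

Section EuclideanNorm.
Variables (R : realType) (d : nat).
Notation V := 'rV[R]_d.
Implicit Types (x y c : V).

Lemma enorm_ge0 x : 0 <= enorm x. Proof. exact: sqrtr_ge0. Qed.

Lemma enorm0 : enorm (0 : V) = 0.
Proof. by rewrite /enorm big1 ?sqrtr0 // => i _; rewrite mxE expr0n. Qed.

Lemma enormZ k x : enorm (k *: x) = `|k| * enorm x.
Proof.
rewrite /enorm (eq_bigr (fun i => k ^+ 2 * x ord0 i ^+ 2)); last first.
  by move=> i _; rewrite mxE exprMn.
by rewrite -mulr_sumr sqrtrM ?sqr_ge0 // sqrtr_sqr.
Qed.

Lemma enormN x : enorm (- x) = enorm x.
Proof. by rewrite -scaleN1r enormZ normrN normr1 mul1r. Qed.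

Lemma enorm_distC x y : enorm (x - y) = enorm (y - x).
Proof. by rewrite -enormN opprB. Qed.

Lemma ler_enormD x y : enorm (x + y) <= enorm x + enorm y.
Proof.
rewrite /enorm.
set A := \sum_i x ord0 i ^+ 2; set B := \sum_i y ord0 i ^+ 2.
set C := \sum_i x ord0 i * y ord0 i.
have A_ge0 : 0 <= A by apply: sumr_ge0 => i _; exact: sqr_ge0.
have B_ge0 : 0 <= B by apply: sumr_ge0 => i _; exact: sqr_ge0.
have -> : \sum_i (x + y) ord0 i ^+ 2 = A + C *+ 2 + B.
  rewrite (eq_bigr (fun i => x ord0 i ^+ 2 + (x ord0 i * y ord0 i) *+ 2
                             + y ord0 i ^+ 2)); last by move=> i _; rewrite mxE sqrrD.
  by rewrite !big_split /=.
have C_le : C <= Num.sqrt A * Num.sqrt B.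
  rewrite -sqrtrM // (le_trans (ler_norm C)) // -sqrtr_sqr ler_sqrt ?mulr_ge0 //.
  exact: sum_mul_sqr_le.
rewrite -[leRHS]ger0_norm ?addr_ge0 ?sqrtr_ge0 // -sqrtr_sqr ler_sqrt ?sqr_ge0 //.
by rewrite sqrrD !sqr_sqrtr // !mulr2n; lra.
Qed.

Lemma ler_dist_enorm x y : `|enorm x - enorm y| <= enorm (x - y).
Proof.
have tri (u v : V) : enorm u - enorm v <= enorm (u - v).
  by rewrite lerBlDr -[X in enorm X <= _](subrK v u) ler_enormD.
by rewrite ler_norml tri andbT lerNl opprB enorm_distC tri.
Qed.

Lemma coord_le_enorm x i : `|x ord0 i| <= enorm x.
Proof.
rewrite /enorm -sqrtr_sqr ler_sqrt; last by apply: sumr_ge0 => j _; exact: sqr_ge0.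
by rewrite (bigD1 i) //= lerDl; apply: sumr_ge0 => j _; exact: sqr_ge0.
Qed.

(* [`|x|] is the sup norm of the matrix normed space underlying the topology. *)
Lemma norm_le_enorm x : `|x| <= enorm x.
Proof.
rewrite -[leLHS]/(mx_norm x) mx_normrE; apply/bigmax_leP; split.
  exact: enorm_ge0.
by move=> [i j] _ /=; rewrite (ord1 i); exact: coord_le_enorm.
Qed.

Lemma enorm_le_norm x : enorm x <= Num.sqrt d%:R * `|x|.
Proof.
rewrite /enorm -(ger0_norm (normr_ge0 x)) -sqrtr_sqr -sqrtrM ?ler0n //.
rewrite ler_sqrt ?mulr_ge0 ?ler0n ?sqr_ge0 //.
apply: (@le_trans _ _ (\sum_(i < d) `|x| ^+ 2)); last first.
  by rewrite sumr_const card_ord mulr_natl.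
apply: ler_sum => i _; rewrite -real_normK ?num_real //.
rewrite lerXn2r ?nnegrE ?normr_ge0 //.
rewrite -[leRHS]/(mx_norm x) mx_normrE; apply/bigmax_geP; right.
by exists (ord0, i).
Qed.

Lemma enormB_continuous c : continuous (fun y : V => enorm (y - c)).
Proof.
apply: (@lipschitz_continuous _ _ _ (Num.sqrt d%:R)) => x y.
by rewrite (le_trans (ler_dist_enorm _ _)) // opprB addrA subrK enorm_le_norm.
Qed.

End EuclideanNorm.

Section Distance.
Variables (R : realType) (d : nat).
Notation V := 'rV[R]_d.
Implicit Types (x y p c : V) (E : set V).

Lemma dist_lbound x E : has_lbound [set enorm (x - y) | y in E].
Proof. by exists 0 => _ [y _ <-]; exact: enorm_ge0. Qed.

Lemma dist_le_enorm x E y : E y -> dist x E <= enorm (x - y).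
Proof. by move=> Ey; apply: (ge_inf (dist_lbound x E)); exists y. Qed.
Arguments dist_le_enorm x {E y}.

Lemma dist_lt_point x E (r : R) : E !=set0 -> dist x E < r ->
  exists2 y, E y & enorm (x - y) < r.
Proof.
move=> [y0 Ey0] xE_lt.
have xE_inf : has_inf [set enorm (x - y) | y in E].
  by split; [exists (enorm (x - y0)), y0 | exact: dist_lbound].
have gap : 0 < r - dist x E by rewrite subr_gt0.
have [_ [y Ey <-] xy_lt] := inf_adherent gap xE_inf.
by move: xy_lt; rewrite -/(dist x E) [_ + (r - _)]addrC subrK; exists y.
Qed.

Lemma oball_disjoint_dist E (r : R) c : E !=set0 ->
  oball r c `&` E = set0 <-> r <= dist c E.
Proof.
move=> [y0 Ey0]; split => [cE0|r_le].
  apply: lb_le_inf; first by exists (enorm (c - y0)), y0.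
  move=> _ [y Ey <-]; rewrite leNgt; apply/negP => cy_lt.
  suff : (oball r c `&` E) y by rewrite cE0.
  by split => //; rewrite /oball /= enorm_distC.
apply/seteqP; split => // y [cy Ey]; move: cy; rewrite /oball /= enorm_distC.
by have := dist_le_enorm c Ey; lra.
Qed.

Lemma dist_lipschitz E x y : E !=set0 -> `|dist x E - dist y E| <= enorm (x - y).
Proof.
move=> [z0 Ez0].
have tri (x' y' : V) : dist x' E <= enorm (x' - y') + dist y' E.
  rewrite -lerBlDl; apply: lb_le_inf; first by exists (enorm (y' - z0)), z0.
  move=> _ [z Ez <-]; rewrite lerBlDl.
  apply: le_trans (dist_le_enorm x' Ez) _.
  by have := ler_enormD (x' - y') (y' - z); rewrite addrA subrK.
by rewrite ler_norml lerBlDr tri andbT lerNl opprB lerBlDr enorm_distC tri.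
Qed.

Lemma compact_setI_enorm_le E p (s : R) :
  closed E -> compact (E `&` [set y | enorm (y - p) <= s]).
Proof.
move=> E_closed; apply: bounded_closed_compact.
  exists (s + enorm p); split; first exact: num_real.
  move=> M M_gt y [_ py_le] /=; apply: le_trans (norm_le_enorm y) _.
  by have := ler_enormD (y - p) p; rewrite subrK; move: py_le => /=; lra.
apply: closedI => //; apply: (preimage_closed (D := [set z | z <= s])).
  by move=> z _; exact: enormB_continuous.
exact: closed_le.
Qed.

Lemma dist_attained E p : closed E -> E !=set0 ->
  exists2 a, E a & enorm (p - a) = dist p E.
Proof.
move=> E_closed E_ne.
pose K := E `&` [set y | enorm (y - p) <= dist p E + 1].
have K_near e : 0 < e -> exists2 y, K y & enorm (p - y) < dist p E + Num.min e 1.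
  move=> e_gt0; have [y Ey py_lt] : exists2 y, E y & enorm (p - y) < dist p E + Num.min e 1.
    by apply: dist_lt_point => //; rewrite ltrDl lt_min e_gt0 ltr01.
  exists y => //; split => //=.
  by rewrite enorm_distC ltW // (lt_le_trans py_lt) // lerD2l ge_min lexx orbT.
have K_ne : K !=set0 by have [y Ky _] := K_near 1 ltr01; exists y.
have [a] := EVT_min_rV K_ne (compact_setI_enorm_le (p := p) (s := dist p E + 1) E_closed)
  (continuous_subspaceT (enormB_continuous (c := p))).
rewrite inE => -[Ea _] a_min; exists a => //.
apply/eqP; rewrite eq_le dist_le_enorm // andbT; apply/ler_addgt0Pr => e e_gt0.
have [y Ky py_lt] := K_near e e_gt0.
have := a_min y; rewrite inE enorm_distC (enorm_distC y) => /(_ Ky) pa_le.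
by rewrite ltW // (le_lt_trans pa_le) // (lt_le_trans py_lt) // lerD2l ge_min lexx.
Qed.

End Distance.

Section SlidingBall.
Variables (R : realType) (d : nat).
Notation V := 'rV[R]_d.
Implicit Types (x p c : V) (E : set V).

(* Moving [a] slightly towards [p] inside [E] would bring it closer to [p]. *)
Lemma nearest_point_bdry E p a :
  E a -> enorm (p - a) = dist p E -> 0 < dist p E -> bdry E a.
Proof.
move=> Ea pa_dist dist_gt0; split; first exact: subset_closure.
move=> /nbhs_ballP [e e_gt0 ball_sub].
set u := p - a.
have u1_gt0 : 0 < `|u| + 1 by rewrite ltr_wpDl.
pose t := Num.min (2^-1) (e / (`|u| + 1)).
have t_gt0 : 0 < t by rewrite lt_min divr_gt0 // invr_gt0 ltr0n.
have t_lt1 : t < 1 by rewrite gt_min invf_lt1 ?ltr0n // ltr1n.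
have Eat : E (a + t *: u).
  apply: ball_sub; rewrite -ball_normE /ball_ /= opprD addNKr normrN normrZ.
  rewrite gtr0_norm // (@lt_le_trans _ _ (t * (`|u| + 1))) ?ltr_pM2l ?ltrDl //.
  by rewrite -ler_pdivlMr // ge_min lexx orbT.
have closer : p - (a + t *: u) = (1 - t) *: u.
  by rewrite scalerBl scale1r opprD addrA.
have := dist_le_enorm p Eat; rewrite closer enormZ ger0_norm; last first.
  by rewrite subr_ge0 ltW.
by rewrite /u pa_dist; nra.
Qed.

Lemma dist_eq_touching_ball E p (r : R) : 0 < r -> closed E -> E !=set0 ->
  dist p E = r -> exists a v, [/\ bdry E a, NR r E a v & p = a + r *: v].
Proof.
move=> r_gt0 E_closed E_ne pE_r.
have [a Ea pa_r] := dist_attained p E_closed E_ne.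
rewrite pE_r in pa_r.
have center : p = a + r *: (r^-1 *: (p - a)).
  by rewrite scalerA mulfV ?gt_eqF // scale1r addrC subrK.
exists a, (r^-1 *: (p - a)); split => //.
- by apply: (nearest_point_bdry (p := p)); rewrite ?pE_r.
- split; first by rewrite /sphere /= enormZ pa_r ger0_norm ?invr_ge0 ?ltW ?mulVf ?gt_eqF.
  by rewrite -center setIC; apply/oball_disjoint_dist => //; rewrite pE_r.
Qed.

Lemma disjoint_ball_slides E c x (r : R) : E !=set0 ->
  dist x E < r -> oball r c `&` E = set0 -> oball r c x ->
  exists2 p, dist p E = r & oball r p x.
Proof.
move=> E_ne xE_lt cE0 cx_lt.
set w := x - c; pose g t := dist (c + t *: w) E.
have g_cont : continuous g.
  apply: (@lipschitz_continuous _ _ _ (enorm w)) => t s.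
  rewrite (le_trans (dist_lipschitz _ _ E_ne)) // opprD addrACA subrr add0r.
  by rewrite -scalerBl enormZ mulrC.
have g0 : g 0 = dist c E by rewrite /g scale0r addr0.
have g1 : g 1 = dist x E by rewrite /g scale1r /w addrC subrK.
have g0_ge : r <= g 0 by rewrite g0; apply/oball_disjoint_dist.
have [t /andP[t_ge0 t_le1]] : exists2 t, 0 <= t <= 1 & g t = r.
  have [|t] := @IVT _ g 0 1 r ler01 (continuous_subspaceT g_cont).
    by rewrite g1 ge_min le_max g0_ge (ltW xE_lt) !orbT.
  by rewrite in_itv /= => ? <-; exists t.
move=> gt_r; exists (c + t *: w) => //; rewrite /oball /=.
have -> : x - (c + t *: w) = (1 - t) *: w.
  by rewrite scalerBl scale1r opprD addrA /w [_ + - c]addrC.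
rewrite enormZ ger0_norm ?subr_ge0 //; apply: le_lt_trans cx_lt.
by rewrite -/w ler_piMl ?enorm_ge0 // lerBlDr lerDl.
Qed.

End SlidingBall.

Theorem mainTheorem12 (R : realType) (d : nat) (r : R) (E : set 'rV[R]_d) :
  0 < r -> body E -> R_supported r E ->
  hulloid r E = Rnbhd r E `&` \bigcap_(a in bdry E) Ccone r (NR r E a) a.
Proof.
move=> r_gt0 [E_closed E_ne] _.
apply/seteqP; split => x.
- move=> x_hull; split.
    rewrite /Rnbhd /= ltNge; apply/negP => /(oball_disjoint_dist _ _ E_ne) xE0.
    by apply: (x_hull x xE0); rewrite /oball /= subrr enorm0.
  by move=> a _ v [_ ball0]; apply: x_hull; rewrite /= setIC.
- move=> [xE_lt x_cones] c cE0 cx_lt.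
  have [p pE_r px_lt] := disjoint_ball_slides E_ne xE_lt cE0 cx_lt.
  have [a [v [a_bdry v_NR p_eq]]] := dist_eq_touching_ball r_gt0 E_closed E_ne pE_r.
  by apply: (x_cones a a_bdry v v_NR); rewrite -p_eq.
Qed.
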